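(* Let $(M,d)$ be a metric space, $\mathsf{P}\subseteq M$ a set of $n$ points, $1\le\ell\le k\le n$ integers and $m=\lfloor k/\ell\rfloor$. Let $\sigma_{\mathrm{med}}=\min_{S\subseteq\mathsf{P},|S|=m}\sum_{p\in\mathsf{P}} d_S(p,1)$ and $\sigma_{\mathrm{opt}}=\min_{C'\subseteq\mathsf{P},|C'|=k}\sum_{p\in\mathsf{P}} d_{C'}(p,\ell)$. Then $\sigma_{\mathrm{med}}\le 2\sigma_{\mathrm{opt}}$.
   Context: For a finite set $S\subseteq M$, a point $p\in M$ and an integer $1\le i\le|S|$, $d_S(p,i)$ denotes the radius of the smallest closed ball centered at $p$ containing at least $i$ points of $S$ (distance to the $i$-th nearest point of $S$). *)

From HB Require Import structures.
From mathcomp Require Import all_boot all_order all_algebra.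
Set Implicit Arguments. Unset Strict Implicit. Unset Printing Implicit Defensive.
Import Order.TTheory GRing.Theory Num.Theory.
Local Open Scope ring_scope.

Definition is_metric (R : realFieldType) (M : Type) (d : M -> M -> R) : Prop :=
  [/\ forall x y, 0 <= d x y,
      forall x y, d x y = 0 <-> x = y,
      forall x y, d x y = d y x
    & forall x y z, d x z <= d x y + d y z].

(* The point set P = { pts j | j : 'I_n } (pts injective); a subset S of P
   is represented by a set of indices S : {set 'I_n}.
   dS d pts S p i = distance from p to the i-th nearest point of S
   (i counted from 1): the (i-1)-th entry of the sorted list of distances. *)
Definition dS (R : realFieldType) (M : Type) (d : M -> M -> R) (n : nat)
  (pts : 'I_n -> M) (S : {set 'I_n}) (p : M) (i : nat) : R :=
  nth 0 (sort <=%R [seq d p (pts s) | s <- enum S]) i.-1.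

Definition cost (R : realFieldType) (M : Type) (d : M -> M -> R) (n : nat)
  (pts : 'I_n -> M) (S : {set 'I_n}) (i : nat) : R :=
  \sum_(j < n) dS d pts S (pts j) i.

Definition is_min_cost (R : realFieldType) (M : Type) (d : M -> M -> R)
  (n : nat) (pts : 'I_n -> M) (m i : nat) (v : R) : Prop :=
  (exists S : {set 'I_n}, #|S| = m /\ cost d pts S i = v) /\
  (forall S : {set 'I_n}, #|S| = m -> v <= cost d pts S i).

From HB Require Import structures.
From mathcomp Require Import all_boot all_order all_algebra.
From mathcomp Require Import zify.
Set Implicit Arguments. Unset Strict Implicit. Unset Printing Implicit Defensive.
Import Order.TTheory GRing.Theory Num.Theory.
Local Open Scope ring_scope.

(* Fix an optimal set C of k
   centres for the l-th-nearest-centre cost and let r j = d_C(p_j, l).  The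
   closed ball of radius r j around p_j contains at least l points of C; call
   this set of centres N j.  Greedily pick points in increasing order of r,
   discarding every point whose N meets the N of a picked point.  The picked
   neighbourhoods are pairwise disjoint subsets of C of size >= l, so at most
   k / l points are picked; every point p_j meets the neighbourhood of a picked
   point p with r p <= r j, so by the triangle inequality d(p_j, p) <= 2 r j.
   Padding the picked set to size k / l gives a 1-median candidate whose cost
   is at most 2 * sigma_opt. *)

Lemma count_enum_card (T : finType) (S : {set T}) (P : pred T) :
  count P (enum S) = #|[set s in S | P s]|.
Proof.
rewrite cardE /enum_mem -!size_filter -filter_predI.
by congr size; apply: eq_filter => x; rewrite !inE andbC.
Qed.

Lemma dS_first_le (R : realFieldType) (M : Type) (d : M -> M -> R) (n : nat)
    (pts : 'I_n -> M) (S : {set 'I_n}) (x : M) (s : 'I_n) :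
  s \in S -> dS d pts S x 1 <= d x (pts s).
Proof.
move=> sS; rewrite /dS /=.
have : d x (pts s) \in sort <=%R [seq d x (pts s) | s <- enum S].
  by rewrite mem_sort; apply: map_f; rewrite mem_enum.
have := sort_sorted (@le_total _ R) [seq d x (pts s) | s <- enum S].
case: (sort _ _) => [|a t] //= sorted_at.
rewrite inE => /orP [/eqP -> //|in_t].
by have /allP := order_path_min (@le_trans _ R) sorted_at; apply.
Qed.

(* For 1 <= i <= |S|, the closed ball of radius d_S(x, i) around x contains
   at least i points of S: the first i entries of the sorted distance list
   are all <= its i-th entry. *)
Lemma dS_ball_card (R : realFieldType) (M : Type) (d : M -> M -> R) (n : nat)
    (pts : 'I_n -> M) (S : {set 'I_n}) (x : M) (i : nat) :
  (1 <= i)%N -> (i <= #|S|)%N ->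
  (i <= #|[set s in S | (d x (pts s) <= dS d pts S x i)%R]|)%N.
Proof.
move=> i_gt0 i_le; rewrite -count_enum_card /dS.
set t := sort _ _; set rad := nth _ _ _.
rewrite -[count _ _]/(count ((<= rad) \o (fun s => d x (pts s))) (enum S)).
have t_perm : perm_eq t [seq d x (pts s) | s <- enum S] by rewrite perm_sort.
rewrite -count_map -(permP t_perm).
have size_t : size t = #|S| by rewrite size_sort size_map cardE.
have sorted_t : sorted <=%R t by apply: sort_sorted; apply: le_total.
have prefix_le : all (<= rad) (take i t).
  apply/(all_nthP 0) => j; rewrite size_takel ?size_t // => j_lt.
  rewrite nth_take //.
  apply: (sorted_leq_nth (@le_trans _ R) (@lexx _ R) 0 sorted_t);
    rewrite ?inE ?size_t; lia.
rewrite -(cat_take_drop i t) count_cat.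
apply: leq_trans (leq_addr _ _).
by move: prefix_le; rewrite all_count => /eqP ->; rewrite size_takel ?size_t.
Qed.

(* Repeatedly select a point of minimal radius and discard
   all points whose neighbourhood meets the selected one. *)
Lemma disjoint_representatives (R : realDomainType) (I J : finType)
    (r : I -> R) (N : I -> {set J}) (T : {set I}) :
  (forall q, N q != set0) ->
  exists Sel : {set I}, [/\ Sel \subset T,
    {in Sel &, forall p p', p != p' -> [disjoint N p & N p']} &
    forall q, q \in T ->
      exists2 p, p \in Sel & ~~ [disjoint N q & N p] && (r p <= r q)].
Proof.
move=> N_neq0; have [s] := ubnP #|T|; elim: s T => // s IH T /ltnSE-card_T.
have [->|[q0 q0T]] := set_0Vmem T.
  by exists set0; split=> [|p|q]; rewrite ?sub0set ?inE.
have [q1 q1T q1_min] := @arg_minP _ _ _ q0 (mem T) r q0T.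
have {}q1T : q1 \in T := q1T.
pose T' := [set q in T | [disjoint N q & N q1]].
have sub_T' : T' \subset T by apply/subsetP => q; rewrite inE => /andP[].
have q1_notin : q1 \notin T'.
  by rewrite inE -setI_eq0 setIid; apply/nandP; right; apply: N_neq0.
have lt_T' : (#|T'| < s)%N.
  apply: leq_trans card_T; apply: proper_card; apply/properP.
  by split=> //; exists q1.
have [Sel [Sel_sub Sel_dis Sel_cov]] := IH T' lt_T'.
have Sel_far p : p \in Sel -> [disjoint N p & N q1].
  by move/(subsetP Sel_sub); rewrite inE => /andP[].
exists (q1 |: Sel); split.
- by rewrite subUset sub1set q1T (subset_trans Sel_sub).
- move=> p p' /setU1P[-> | pS] /setU1P[-> | p'S]; rewrite ?eqxx //.
  + by move=> _; rewrite disjoint_sym Sel_far.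
  + by move=> _; rewrite Sel_far.
  + exact: Sel_dis.
- move=> q qT; case: (boolP [disjoint N q & N q1]) => [far | near].
    have qT' : q \in T' by rewrite inE qT far.
    by have [p pS p_close] := Sel_cov q qT'; exists p => //; rewrite setU1r.
  by exists q1; rewrite ?setU11 // near q1_min.
Qed.

Lemma card_disjoint_family (I J : finType) (N : I -> {set J})
    (Sel : {set I}) (C : {set J}) (l : nat) :
  (0 < l)%N -> (forall p, p \in Sel -> l <= #|N p|)%N ->
  (forall p, p \in Sel -> N p \subset C) ->
  {in Sel &, forall p p', p != p' -> [disjoint N p & N p']} ->
  (l * #|Sel| <= #|C|)%N.
Proof.
move=> l_gt0 N_big N_sub N_dis.
have N_inj : {in Sel &, injective N}.
  move=> p p' pS p'S eq_N; case: (eqVneq p p') => // neq; exfalso.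
  move: (N_big p' p'S) (N_dis p p' pS p'S neq).
  by rewrite eq_N -setI_eq0 setIid -cards_eq0 => l_le /eqP card0; lia.
pose P := N @: Sel.
have P_triv : trivIset P.
  apply/trivIsetP => _ _ /imsetP[p pS ->] /imsetP[p' p'S ->] neq.
  by apply: N_dis => //; apply: contraNneq neq => ->.
have cover_card : #|cover P| = (\sum_(A in P) #|A|)%N.
  by apply/eqP; rewrite (leq_card_cover P).2.
rewrite -(card_in_imset N_inj) mulnC -sum_nat_const.
apply: (@leq_trans (\sum_(A in P) #|A|)).
  by apply: leq_sum => _ /imsetP[p pS ->]; apply: N_big.
rewrite -cover_card; apply: subset_leq_card.
by apply/bigcupsP => _ /imsetP[p pS ->]; apply: N_sub.
Qed.

Lemma extend_to_card (T : finType) (A : {set T}) (m : nat) :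
  (#|A| <= m <= #|T|)%N -> exists B : {set T}, A \subset B /\ #|B| = m.
Proof.
move=> /andP[A_le m_le]; move e: (m - #|A|)%N => gap.
elim: gap A e A_le => [|gap IH] A e A_le.
  by exists A; split => //; lia.
have : ~~ ([set: T] \subset A).
  by apply/negP => /subset_leq_card; rewrite cardsT; lia.
case/subsetPn => x _ xA.
have [||B [sub_B card_B]] := IH (x |: A); rewrite ?cardsU1 ?xA //=; try lia.
by exists B; split => //; apply: subset_trans sub_B; apply: subsetUr.
Qed.

Lemma dist_le_common_point (R : realFieldType) (M : Type) (d : M -> M -> R)
    (x y z : M) (rx ry : R) :
  is_metric d -> d x z <= rx -> d y z <= ry -> d x y <= rx + ry.
Proof.
move=> [_ _ d_sym d_tri] xz yz.
by apply: le_trans (d_tri x z y) _; rewrite lerD // d_sym.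
Qed.

Theorem claim2 (R : realFieldType) (M : Type) (d : M -> M -> R)
  (n : nat) (pts : 'I_n -> M) (l k : nat) (sigma_med sigma_opt : R) :
  is_metric d -> injective pts ->
  (1 <= l)%N -> (l <= k)%N -> (k <= n)%N ->
  is_min_cost d pts (k %/ l) 1 sigma_med ->
  is_min_cost d pts k l sigma_opt ->
  sigma_med <= 2 * sigma_opt.
Proof.
move=> d_metric _ l_gt0 l_le_k k_le_n [_ med_min] [[C [card_C C_opt]] _].
pose r j := dS d pts C (pts j) l.
pose N j := [set c in C | d (pts j) (pts c) <= r j].
have N_big j : (l <= #|N j|)%N by apply: dS_ball_card; rewrite ?card_C.
have N_sub j : N j \subset C by apply/subsetP => c; rewrite inE => /andP[].
have N_neq0 j : N j != set0 by rewrite -card_gt0 (leq_trans l_gt0).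
have [Sel [_ Sel_dis Sel_cov]] := disjoint_representatives r [set: 'I_n] N_neq0.
have card_Sel : (#|Sel| <= k %/ l)%N.
  rewrite leq_divRL // mulnC -card_C.
  by apply: card_disjoint_family => // p _.
have card_bounds : (#|Sel| <= k %/ l <= #|'I_n|)%N.
  by rewrite card_Sel card_ord (leq_trans (leq_div k l)).
have [S [Sel_S card_S]] := extend_to_card card_bounds.
apply: le_trans (med_min S card_S) _.
rewrite -C_opt /cost mulr_sumr; apply: ler_sum => j _.
have [p pS /andP[meet r_p]] := Sel_cov j (in_setT j).
move: meet; rewrite -setI_eq0 => /set0Pn[c /setIP[]].
rewrite !inE => /andP[_ jc] /andP[_ pc].
apply: le_trans (dS_first_le d pts (pts j) (subsetP Sel_S p pS)) _.
by rewrite mulr2n mulrDl mul1r (dist_le_common_point d_metric jc) // (le_trans pc).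
Qed.
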